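(* For every integer $t$, \begin{align*} \sum_{n=1}^\infty(-1)^{n-1}\binom{2n}{n}\frac{O_n}{16^n}L_{2n+t}&=\frac{\alpha^t}{\sqrt{\alpha+5}}\ln\Bigl(\frac{\alpha+5}{4}\Bigr)+\frac{\beta^t}{\sqrt{\beta+5}}\ln\Bigl(\frac{\beta+5}{4}\Bigr),\\ \sum_{n=1}^\infty(-1)^{n-1}\binom{2n}{n}\frac{O_n}{16^n}F_{2n+t}&=\frac1{\sqrt5}\left(\frac{\alpha^t}{\sqrt{\alpha+5}}\ln\Bigl(\frac{\alpha+5}{4}\Bigr)-\frac{\beta^t}{\sqrt{\beta+5}}\ln\Bigl(\frac{\beta+5}{4}\Bigr)\right), \end{align*} and, for every gibonacci sequence $G_j=G_j(a,b)$, \[ \sum_{n=1}^\infty(-1)^{n-1}\binom{2n}{n}\frac{O_n}{16^n}G_{2n+t}=\frac1{\sqrt5}\left(\frac{(b-a\beta)\alpha^t}{\sqrt{\alpha+5}}\ln\Bigl(\frac{\alpha+5}{4}\Bigr)-\frac{(b-a\alpha)\beta^t}{\sqrt{\beta+5}}\ln\Bigl(\frac{\beta+5}{4}\Bigr)\right). \]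
   Context: $O_n=\sum_{j=1}^n\frac1{2j-1}$. $F_n$ and $L_n$ are the Fibonacci and Lucas numbers ($F_0=0,F_1=1$, $L_0=2,L_1=1$, $u_n=u_{n-1}+u_{n-2}$), extended to all integers by the recurrence. $\alpha=(1+\sqrt5)/2$, $\beta=-1/\alpha$. For numbers $a,b$ not both zero, the gibonacci sequence $G_j=G_j(a,b)$ is defined by $G_0=a$, $G_1=b$, $G_j=G_{j-1}+G_{j-2}$, extended to negative indices by $G_{-j}=G_{-(j-2)}-G_{-(j-1)}$; equivalently $G_j=\frac{(b-a\beta)\alpha^j+(a\alpha-b)\beta^j}{\alpha-\beta}$. *)

From Stdlib Require Import Reals ZArith.
From Coquelicot Require Import Coquelicot.
Open Scope R_scope.

Fixpoint Odd_harm (n : nat) : R :=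
  match n with
  | O => 0
  | S m => Odd_harm m + / (2 * INR (S m) - 1)
  end.

Fixpoint gib_fwd (a b : R) (n : nat) : R * R :=
  match n with
  | O => (a, b)
  | S m => let (x, y) := gib_fwd a b m in (y, x + y)
  end.

(* backward pairs (G_{-n}, G_{-n+1}), using G_{k-1} = G_{k+1} - G_k *)
Fixpoint gib_bwd (a b : R) (n : nat) : R * R :=
  match n with
  | O => (a, b)
  | S m => let (x, y) := gib_bwd a b m in (y - x, x)
  end.

Definition gib (a b : R) (j : Z) : R :=
  match j with
  | Z0 => a
  | Zpos p => fst (gib_fwd a b (Pos.to_nat p))
  | Zneg p => fst (gib_bwd a b (Pos.to_nat p))
  end.

Definition Fib (j : Z) : R := gib 0 1 j.
Definition Luc (j : Z) : R := gib 2 1 j.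

Definition alpha : R := (1 + sqrt 5) / 2.
Definition beta : R := - / alpha.

Definition coef (n : nat) : R :=
  (-1) ^ (n - 1) * Binomial.C (2 * n) n * Odd_harm n / 16 ^ n.

(* With d_n = C(2n,n)/4^n, the power series c(x) = sum_n (-1)^n d_n x^n / 2 and
   A(x) = sum_n (-1)^(n-1) d_n O_n x^n satisfy (1+x) c' + c/2 = 0 and
   (1+x) A' + A/2 = c on (-1,1), by the recurrence d_(n+1) = d_n (2n+1)/(2n+2).
   Multiplying by sqrt(1+x) gives (sqrt(1+x) c)' = 0 and (sqrt(1+x) A)' = 1/(2(1+x)),
   hence A(x) = ln(1+x) / (2 sqrt(1+x)).  The series of the theorem is x^t A(x^2/4)
   for x in {alpha, beta}, where x^2 = x + 1 makes 1 + x^2/4 = (x+5)/4, and Binet's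
   formula G_j = ((b - a beta) alpha^j + (a alpha - b) beta^j) / sqrt 5 combines
   the two evaluations. *)

From Stdlib Require Import Reals ZArith Lra Lia.
From Coquelicot Require Import Coquelicot.
Open Scope R_scope.

Definition cbinom4 (n : nat) : R := Binomial.C (2 * n) n / 4 ^ n.

Lemma cbinom4_0 : cbinom4 0 = 1.
Proof. unfold cbinom4, Binomial.C; simpl; field. Qed.

Lemma cbinom4_S n : cbinom4 (S n) = cbinom4 n * ((2 * INR n + 1) / (2 * INR n + 2)).
Proof.
  unfold cbinom4, Binomial.C.
  replace (2 * S n - S n)%nat with (S n) by lia.
  replace (2 * n - n)%nat with n by lia.
  replace (2 * S n)%nat with (S (S (2 * n))) by lia.
  rewrite !fact_simpl, !mult_INR, !S_INR, mult_INR; simpl pow.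
  assert (INR (Factorial.fact n) <> 0) by (apply not_0_INR, Factorial.fact_neq_0).
  assert (0 < 4 ^ n) by (apply pow_lt; lra).
  assert (0 <= INR n) by apply pos_INR.
  change (INR 2) with 2.
  field; lra.
Qed.

Lemma cbinom4_bound n : 0 <= cbinom4 n <= 1.
Proof.
  induction n as [|n IH].
  - rewrite cbinom4_0; lra.
  - rewrite cbinom4_S.
    assert (0 <= INR n) by apply pos_INR.
    assert (0 <= (2 * INR n + 1) / (2 * INR n + 2) <= 1).
    { split; [apply Rdiv_le_0_compat; lra|].
      apply Rmult_le_reg_r with (2 * INR n + 2); [lra|].
      field_simplify; lra. }
    nra.
Qed.

Lemma Odd_harm_bound n : 0 <= Odd_harm n <= INR n.
Proof.
  induction n as [|n IH].
  - simpl; lra.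
  - change (Odd_harm (S n)) with (Odd_harm n + / (2 * INR (S n) - 1)).
    rewrite S_INR.
    assert (0 <= INR n) by apply pos_INR.
    assert (0 < / (2 * (INR n + 1) - 1) <= 1).
    { split; [apply Rinv_0_lt_compat; lra|].
      rewrite <- Rinv_1; apply Rinv_le_contravar; lra. }
    lra.
Qed.

Definition inv_sqrt_coef (n : nat) : R := (-1) ^ n * cbinom4 n / 2.
Definition log_sqrt_coef (n : nat) : R := (-1) ^ (n - 1) * cbinom4 n * Odd_harm n.

Lemma inv_sqrt_coef_rec n :
  INR (S n) * inv_sqrt_coef (S n) + (INR n + / 2) * inv_sqrt_coef n = 0.
Proof.
  unfold inv_sqrt_coef. rewrite cbinom4_S, S_INR. simpl pow.
  assert (0 <= INR n) by apply pos_INR.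
  field. lra.
Qed.

Lemma log_sqrt_coef_rec n :
  INR (S n) * log_sqrt_coef (S n) + (INR n + / 2) * log_sqrt_coef n = inv_sqrt_coef n.
Proof.
  unfold log_sqrt_coef, inv_sqrt_coef. rewrite cbinom4_S.
  change (Odd_harm (S n)) with (Odd_harm n + / (2 * INR (S n) - 1)).
  rewrite S_INR. replace (S n - 1)%nat with n by lia.
  assert (0 <= INR n) by apply pos_INR.
  destruct n as [|n].
  - rewrite cbinom4_0. simpl. field.
  - replace (S n - 1)%nat with n by lia. simpl pow. field. lra.
Qed.

Lemma inv_sqrt_coef_bound n : Rabs (inv_sqrt_coef n) <= INR n + 1.
Proof.
  unfold inv_sqrt_coef. rewrite Rabs_div, Rabs_mult, pow_1_abs by lra.
  destruct (cbinom4_bound n). assert (0 <= INR n) by apply pos_INR.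
  rewrite Rabs_pos_eq, (Rabs_pos_eq 2) by lra. lra.
Qed.

Lemma log_sqrt_coef_bound n : Rabs (log_sqrt_coef n) <= INR n + 1.
Proof.
  unfold log_sqrt_coef. rewrite !Rabs_mult, pow_1_abs.
  destruct (cbinom4_bound n), (Odd_harm_bound n).
  rewrite (Rabs_pos_eq (cbinom4 n)), (Rabs_pos_eq (Odd_harm n)) by lra. nra.
Qed.

Lemma linear_pow_bound r n : 0 <= r < 1 -> (INR n + 1) * r ^ n * (1 - r) <= 1.
Proof.
  intros Hr. induction n as [|n IH].
  - simpl; lra.
  - rewrite S_INR. simpl pow in *.
    assert (0 <= r ^ n) by (apply pow_le; lra).
    pose proof (Rmult_le_compat_l r _ _ (proj1 Hr) IH).
    pose proof (pow_lt_1_compat r (S n) Hr (Nat.lt_0_succ n)) as Hlt; simpl pow in Hlt.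
    nra.
Qed.

Lemma CV_radius_linear_bound (e : nat -> R) :
  (forall n, Rabs (e n) <= INR n + 1) ->
  forall x, Rabs x < 1 -> Rbar_lt (Rabs x) (CV_radius e).
Proof.
  intros He x Hx.
  set (r := (Rabs x + 1) / 2).
  assert (Hr : 0 <= r < 1) by (pose proof (Rabs_pos x); unfold r; lra).
  apply Rbar_lt_le_trans with r; [simpl; unfold r; lra|].
  apply (proj1 (CV_radius_bounded e)).
  exists (/ (1 - r)). intro n.
  assert (0 <= r ^ n) by (apply pow_le; lra).
  assert (Hb := linear_pow_bound r n Hr).
  rewrite Rabs_mult, (Rabs_pos_eq (r ^ n)) by assumption.
  apply Rle_trans with ((INR n + 1) * r ^ n).
  - apply Rmult_le_compat_r; [assumption | apply He].
  - apply Rmult_le_reg_r with (1 - r); [lra|].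
    rewrite Rinv_l by lra. nra.
Qed.

Lemma is_derive_0_eq (f : R -> R) r u :
  (forall x, Rabs x < r -> is_derive f x 0) -> Rabs u < r -> f u = f 0.
Proof.
  intros Hf Hu.
  assert (H := bounded_variation f (fun _ => 0) 0 0 u).
  rewrite Rminus_0_r, Rmult_0_l in H.
  apply Rminus_diag_uniq, Rabs_eq_0, Rle_antisym; [|apply Rabs_pos].
  apply H. intros t Ht. rewrite Rminus_0_r in Ht.
  split; [apply Hf; lra | rewrite Rabs_R0; lra].
Qed.

Lemma PSeries_1px_derive e k x : Rbar_lt (Rabs x) (CV_radius e) ->
  (1 + x) * PSeries (PS_derive e) x + k * PSeries e x
  = PSeries (fun n => PS_derive e n + (INR n + k) * e n) x.
Proof.
  intros Hx.
  assert (Hd := ex_pseries_derive e x Hx).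
  assert (He := CV_radius_inside e x Hx).
  rewrite Rmult_plus_distr_r, Rmult_1_l, <- PSeries_incr_1, <- PSeries_scal.
  rewrite <- PSeries_plus, <- PSeries_plus.
  - apply PSeries_ext. intros [|n]; unfold PS_plus, PS_incr_1, PS_scal, PS_derive;
      cbn -[INR]; rewrite ?S_INR, ?INR_0; ring.
  - apply ex_pseries_plus; [exact Hd | now apply ex_pseries_incr_1].
  - apply ex_pseries_scal; [apply Rmult_comm | exact He].
  - exact Hd.
  - now apply ex_pseries_incr_1.
Qed.

Lemma is_derive_sqrt_1p_PSeries (e g : nat -> R) x :
  (forall n, PS_derive e n + (INR n + / 2) * e n = g n) ->
  Rbar_lt (Rabs x) (CV_radius e) -> -1 < x ->
  is_derive (fun y => sqrt (1 + y) * PSeries e y) x (PSeries g x / sqrt (1 + x)).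
Proof.
  intros Hg Hx Hx1.
  assert (Hs : 0 < sqrt (1 + x)) by (apply sqrt_lt_R0; lra).
  assert (Hss : sqrt (1 + x) * sqrt (1 + x) = 1 + x) by (apply sqrt_sqrt; lra).
  assert (Hsqrt : is_derive (fun y => sqrt (1 + y)) x (/ (2 * sqrt (1 + x)))).
  { replace (/ (2 * sqrt (1 + x))) with (1 / (2 * sqrt (1 + x))) by (field; lra).
    apply (is_derive_sqrt (fun y => 1 + y)); [|lra].
    auto_derive; auto; ring. }
  assert (HD := is_derive_mult _ _ x _ _ Hsqrt (is_derive_PSeries e x Hx) Rmult_comm).
  replace (PSeries g x / sqrt (1 + x)) with
    (/ (2 * sqrt (1 + x)) * PSeries e x + sqrt (1 + x) * PSeries (PS_derive e) x);
    [exact HD|].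
  rewrite <- (PSeries_ext _ _ x Hg), <- PSeries_1px_derive by exact Hx.
  set (s := sqrt (1 + x)) in *. rewrite <- Hss. field. lra.
Qed.

Lemma PSeries_inv_sqrt_coef x : Rabs x < 1 ->
  PSeries inv_sqrt_coef x = / (2 * sqrt (1 + x)).
Proof.
  intros Hx.
  assert (Hx1 : -1 < x) by (apply Rabs_def2 in Hx; lra).
  assert (Hs : 0 < sqrt (1 + x)) by (apply sqrt_lt_R0; lra).
  assert (Hconst := is_derive_0_eq (fun y => sqrt (1 + y) * PSeries inv_sqrt_coef y) 1 x).
  cbv beta in Hconst. rewrite Rplus_0_r, sqrt_1, Rmult_1_l, PSeries_0 in Hconst.
  assert (Hc0 : inv_sqrt_coef 0 = / 2) by (unfold inv_sqrt_coef; rewrite cbinom4_0; simpl; field).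
  assert (Heq : sqrt (1 + x) * PSeries inv_sqrt_coef x = / 2).
  { rewrite <- Hc0. apply Hconst; [|exact Hx]. intros y Hy.
    assert (Hy1 : -1 < y) by (apply Rabs_def2 in Hy; lra).
    replace 0 with (PSeries (fun _ => 0) y / sqrt (1 + y))
      by (rewrite PSeries_const_0; unfold Rdiv; ring).
    apply is_derive_sqrt_1p_PSeries; [exact inv_sqrt_coef_rec | | exact Hy1].
    exact (CV_radius_linear_bound _ inv_sqrt_coef_bound y Hy). }
  apply Rmult_eq_reg_l with (sqrt (1 + x)); [|lra].
  rewrite Heq. field. lra.
Qed.

Lemma PSeries_log_sqrt_coef x : Rabs x < 1 ->
  PSeries log_sqrt_coef x = ln (1 + x) / (2 * sqrt (1 + x)).
Proof.
  intros Hx.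
  assert (Hx1 : -1 < x) by (apply Rabs_def2 in Hx; lra).
  assert (Hs : 0 < sqrt (1 + x)) by (apply sqrt_lt_R0; lra).
  assert (Hconst := is_derive_0_eq
    (fun y => sqrt (1 + y) * PSeries log_sqrt_coef y - ln (1 + y) / 2) 1 x).
  cbv beta in Hconst. rewrite Rplus_0_r, sqrt_1, Rmult_1_l, PSeries_0, ln_1 in Hconst.
  assert (Ha0 : log_sqrt_coef 0 = 0) by (unfold log_sqrt_coef; simpl; ring).
  assert (Heq : sqrt (1 + x) * PSeries log_sqrt_coef x - ln (1 + x) / 2 = 0).
  { replace 0 with (log_sqrt_coef 0 - 0 / 2) by (rewrite Ha0; field).
    apply Hconst; [|exact Hx]. intros y Hy.
    assert (Hy1 : -1 < y) by (apply Rabs_def2 in Hy; lra).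
    assert (Ht : 0 < sqrt (1 + y)) by (apply sqrt_lt_R0; lra).
    assert (Htt : sqrt (1 + y) * sqrt (1 + y) = 1 + y) by (apply sqrt_sqrt; lra).
    assert (HA := is_derive_sqrt_1p_PSeries log_sqrt_coef inv_sqrt_coef y
      log_sqrt_coef_rec (CV_radius_linear_bound _ log_sqrt_coef_bound y Hy) Hy1).
    rewrite PSeries_inv_sqrt_coef in HA by exact Hy.
    assert (Hln : is_derive (fun y => ln (1 + y) / 2) y (/ (1 + y) / 2))
      by (auto_derive; [lra | field; lra]).
    replace 0 with (/ (2 * sqrt (1 + y)) / sqrt (1 + y) - / (1 + y) / 2)
      by (set (s := sqrt (1 + y)) in *; rewrite <- Htt; field; lra).
    exact (is_derive_minus _ _ y _ _ HA Hln). }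
  apply Rmult_eq_reg_l with (sqrt (1 + x)); [|lra].
  replace (sqrt (1 + x) * (ln (1 + x) / (2 * sqrt (1 + x)))) with (ln (1 + x) / 2)
    by (field; lra).
  lra.
Qed.

Lemma coef_mul_pow k z : coef k * z ^ k = log_sqrt_coef k * (z / 4) ^ k.
Proof.
  unfold coef, log_sqrt_coef, cbinom4, Rdiv.
  rewrite Rpow_mult_distr, pow_inv.
  replace 16 with (4 * 4) by ring. rewrite Rpow_mult_distr.
  assert (4 ^ k <> 0) by (apply pow_nonzero; lra).
  field. assumption.
Qed.

Lemma coef_series z : Rabs z < 4 ->
  is_series (fun m => coef (S m) * z ^ S m) (ln ((z + 4) / 4) / sqrt (z + 4)).
Proof.
  intros Hz.
  assert (Hu : Rabs (z / 4) < 1).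
  { unfold Rdiv. rewrite Rabs_mult, (Rabs_pos_eq (/ 4)) by lra. lra. }
  assert (Hz4 : 0 < z + 4) by (apply Rabs_def2 in Hz; lra).
  assert (H := proj1 (is_pseries_R _ _ _) (PSeries_correct _ _
    (CV_radius_inside _ _ (CV_radius_linear_bound _ log_sqrt_coef_bound _ Hu)))).
  apply (is_series_ext (fun m => log_sqrt_coef (S m) * (z / 4) ^ S m));
    [intros m; symmetry; apply coef_mul_pow|].
  apply (is_series_incr_1 (fun n => log_sqrt_coef n * (z / 4) ^ n)).
  replace (plus _ _) with (PSeries log_sqrt_coef (z / 4)); [exact H|].
  rewrite PSeries_log_sqrt_coef by exact Hu.
  replace (1 + z / 4) with ((z + 4) / 4) by field.
  rewrite sqrt_div_alt by lra.
  replace (sqrt 4) with 2 by (rewrite <- (sqrt_square 2) by lra; f_equal; ring).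
  assert (0 < sqrt (z + 4)) by (apply sqrt_lt_R0; lra).
  unfold log_sqrt_coef, plus; simpl. field. lra.
Qed.

Lemma sqrt5_sqr : sqrt 5 * sqrt 5 = 5.
Proof. apply sqrt_sqrt; lra. Qed.

Lemma sqrt5_bounds : 2 < sqrt 5 < 3.
Proof. pose proof sqrt5_sqr; pose proof (sqrt_pos 5); nra. Qed.

Lemma beta_eq : beta = (1 - sqrt 5) / 2.
Proof.
  pose proof sqrt5_sqr; pose proof sqrt5_bounds.
  unfold beta, alpha. field_simplify_eq; [nra | lra].
Qed.

Lemma alpha_sq : alpha ^ 2 = alpha + 1.
Proof. pose proof sqrt5_sqr. unfold alpha. nra. Qed.

Lemma beta_sq : beta ^ 2 = beta + 1.
Proof. pose proof sqrt5_sqr. rewrite beta_eq. nra. Qed.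

Lemma alpha_neq0 : alpha <> 0.
Proof. pose proof sqrt5_bounds. unfold alpha. lra. Qed.

Lemma beta_neq0 : beta <> 0.
Proof. pose proof sqrt5_bounds. rewrite beta_eq. lra. Qed.

Lemma golden_series x t : x <> 0 -> x ^ 2 = x + 1 -> x ^ 2 < 4 ->
  is_series (fun m => coef (S m) * powerRZ x (2 * Z.of_nat (S m) + t))
    (powerRZ x t / sqrt (x + 5) * ln ((x + 5) / 4)).
Proof.
  intros Hx0 Hx2 Hx4.
  assert (Hz : Rabs (x ^ 2) < 4) by (rewrite Rabs_pos_eq by apply pow2_ge_0; exact Hx4).
  assert (Hx5 : 0 < sqrt (x + 5)) by (apply sqrt_lt_R0; nra).
  apply (is_series_ext (fun m => powerRZ x t * (coef (S m) * (x ^ 2) ^ S m))).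
  { intros m. rewrite powerRZ_add by exact Hx0.
    replace (2 * Z.of_nat (S m))%Z with (Z.of_nat (2 * S m)) by lia.
    rewrite <- pow_powerRZ, pow_mult. simpl. ring. }
  replace (powerRZ x t / sqrt (x + 5) * ln ((x + 5) / 4)) with
    (powerRZ x t * (ln ((x ^ 2 + 4) / 4) / sqrt (x ^ 2 + 4)))
    by (rewrite Hx2; replace (x + 1 + 4) with (x + 5) by ring; field; lra).
  exact (is_series_scal _ _ _ (coef_series _ Hz)).
Qed.

Lemma powerRZ_golden_rec x j : x <> 0 -> x ^ 2 = x + 1 ->
  powerRZ x (j + 2) = powerRZ x (j + 1) + powerRZ x j.
Proof.
  intros Hx0 Hx2. rewrite !powerRZ_add by exact Hx0. simpl.
  replace (x * (x * 1)) with (x ^ 2) by ring. rewrite Hx2. ring.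
Qed.

Section GibUnique.

Variables (a b : R) (G : Z -> R).
Hypotheses (G0 : G 0%Z = a) (G1 : G 1%Z = b) (Grec : forall j, G (j + 2)%Z = G (j + 1)%Z + G j).

Lemma gib_fwd_eq n : gib_fwd a b n = (G (Z.of_nat n), G (Z.of_nat n + 1)%Z).
Proof.
  induction n as [|n IH]; cbn [gib_fwd]; [simpl; now rewrite G0, G1|].
  rewrite IH, Nat2Z.inj_succ, <- Z.add_1_r.
  replace (Z.of_nat n + 1 + 1)%Z with (Z.of_nat n + 2)%Z by ring.
  now rewrite Grec, Rplus_comm.
Qed.

Lemma gib_bwd_eq n : gib_bwd a b n = (G (- Z.of_nat n)%Z, G (- Z.of_nat n + 1)%Z).
Proof.
  induction n as [|n IH]; cbn [gib_bwd]; [simpl; now rewrite G0, G1|].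
  rewrite IH. pose proof (Grec (- Z.of_nat (S n))) as E.
  replace (- Z.of_nat (S n) + 2)%Z with (- Z.of_nat n + 1)%Z in E by lia.
  replace (- Z.of_nat (S n) + 1)%Z with (- Z.of_nat n)%Z in E by lia.
  f_equal; [lra | f_equal; lia].
Qed.

Lemma gib_unique j : gib a b j = G j.
Proof.
  destruct j as [|p|p]; simpl.
  - now rewrite G0.
  - now rewrite gib_fwd_eq, positive_nat_Z.
  - now rewrite gib_bwd_eq, positive_nat_Z.
Qed.

End GibUnique.

Definition binet (a b : R) (j : Z) : R :=
  ((b - a * beta) * powerRZ alpha j + (a * alpha - b) * powerRZ beta j) / sqrt 5.

Lemma gib_binet a b j : gib a b j = binet a b j.
Proof.
  pose proof sqrt5_bounds.
  apply gib_unique; unfold binet; simpl.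
  - rewrite beta_eq; unfold alpha; field; lra.
  - rewrite beta_eq; unfold alpha; field; lra.
  - intros k.
    rewrite (powerRZ_golden_rec alpha), (powerRZ_golden_rec beta)
      by (apply alpha_neq0 || apply alpha_sq || apply beta_neq0 || apply beta_sq).
    field; lra.
Qed.

Lemma sqrt_alpha_add5_gt0 : 0 < sqrt (alpha + 5).
Proof. pose proof sqrt5_bounds. apply sqrt_lt_R0. unfold alpha. lra. Qed.

Lemma sqrt_beta_add5_gt0 : 0 < sqrt (beta + 5).
Proof. pose proof sqrt5_bounds. apply sqrt_lt_R0. rewrite beta_eq. lra. Qed.

Lemma gib_series a b t :
  is_series (fun m => coef (S m) * gib a b (2 * Z.of_nat (S m) + t))
    (/ sqrt 5 * ((b - a * beta) * powerRZ alpha t / sqrt (alpha + 5) * ln ((alpha + 5) / 4)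
                 - (b - a * alpha) * powerRZ beta t / sqrt (beta + 5) * ln ((beta + 5) / 4))).
Proof.
  pose proof sqrt5_bounds. pose proof sqrt_alpha_add5_gt0. pose proof sqrt_beta_add5_gt0.
  assert (Ha := golden_series alpha t alpha_neq0 alpha_sq).
  assert (Hb := golden_series beta t beta_neq0 beta_sq).
  rewrite alpha_sq in Ha. rewrite beta_sq in Hb.
  specialize (Ha ltac:(unfold alpha; lra)). specialize (Hb ltac:(rewrite beta_eq; lra)).
  assert (Hab := is_series_plus _ _ _ _ (is_series_scal ((b - a * beta) / sqrt 5) _ _ Ha)
                                      (is_series_scal ((a * alpha - b) / sqrt 5) _ _ Hb)).
  eapply (@eq_ind R).
  - eapply is_series_ext; [|exact Hab]. intros m. rewrite gib_binet. unfold binet.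
    unfold plus, scal; simpl; unfold mult; simpl. field. lra.
  - unfold plus, scal; simpl; unfold mult; simpl. field. lra.
Qed.

Theorem theorem15 : forall t : Z,
  is_series (fun m : nat => coef (S m) * Luc (2 * Z.of_nat (S m) + t))
    (powerRZ alpha t / sqrt (alpha + 5) * ln ((alpha + 5) / 4)
     + powerRZ beta t / sqrt (beta + 5) * ln ((beta + 5) / 4))
  /\
  is_series (fun m : nat => coef (S m) * Fib (2 * Z.of_nat (S m) + t))
    (/ sqrt 5 * (powerRZ alpha t / sqrt (alpha + 5) * ln ((alpha + 5) / 4)
                 - powerRZ beta t / sqrt (beta + 5) * ln ((beta + 5) / 4)))
  /\
  (forall a b : R, ~ (a = 0 /\ b = 0) ->
    is_series (fun m : nat => coef (S m) * gib a b (2 * Z.of_nat (S m) + t))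
      (/ sqrt 5 * ((b - a * beta) * powerRZ alpha t / sqrt (alpha + 5) * ln ((alpha + 5) / 4)
                   - (b - a * alpha) * powerRZ beta t / sqrt (beta + 5) * ln ((beta + 5) / 4)))).
Proof.
  intros t.
  pose proof sqrt5_bounds. pose proof sqrt_alpha_add5_gt0. pose proof sqrt_beta_add5_gt0.
  split; [|split].
  - unfold Luc. eapply (@eq_ind R); [apply gib_series|].
    replace (1 - 2 * beta) with (sqrt 5) by (rewrite beta_eq; field).
    replace (1 - 2 * alpha) with (- sqrt 5) by (unfold alpha; field).
    field. lra.
  - unfold Fib. eapply (@eq_ind R); [apply gib_series|]. field. lra.
  -
    intros a b _. apply gib_series.
Qed.
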